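(* Let $p:\mathbb R^n\to\mathbb R$ be a polynomial with $p(\theta_0)=0$, and assume $p$ is nonnegative on the ball $B_\epsilon(\theta_0)$ centered at $\theta_0$ for some radius $\epsilon>0$. If $m\ge n/2$, then $\int_{B_\epsilon(\theta_0)}p(\theta)^{-m}\,\mathrm d\mu(\theta)=\infty$, where $\mu$ is Lebesgue measure. *)

From HB Require Import structures.
From mathcomp Require Import all_boot all_order all_algebra.
From mathcomp Require Import all_classical all_reals all_analysis.
From mathcomp Require mpoly.
Set Implicit Arguments. Unset Strict Implicit. Unset Printing Implicit Defensive.
Import Order.TTheory GRing.Theory Num.Theory.
Local Open Scope classical_set_scope.
Local Open Scope ring_scope.

(* Points of R^n are n-tuples of reals; n.-tuple R carries the product
   (Borel) sigma-algebra from measurable_structure.v. *)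

(* Lebesgue measure on R^n, defined as the n-fold product of the Lebesgue
   measure on R, in exactly the way the library defines binary product
   measures ([product_measure1]: integrate the measure of the sections). *)
Fixpoint lebesgue_n (R : realType) (n : nat) : set (n.-tuple R) -> \bar R :=
  match n return set (n.-tuple R) -> \bar R with
  | 0 => fun A => ((\1_A [tuple] : R)%:E)
  | n'.+1 => fun A =>
      integral (@lebesgue_measure R) setT (fun x : R =>
         @lebesgue_n R n' [set t : n'.-tuple R | A [tuple of x :: t]])
  end.

Definition euclid_ball (R : realType) (n : nat) (c : n.-tuple R) (eps : R)
  : set (n.-tuple R) :=
  [set t | \sum_(i < n) (tnth t i - tnth c i) ^+ 2 < eps ^+ 2].

Definition poly_eval (R : realType) (n : nat) (p : mpoly.mpoly n R)
  (t : n.-tuple R) : R := mpoly.meval (fun i => tnth t i) p.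

(* x^(-m) as an extended real, for x >= 0: for x = 0 it is +oo when m > 0,
   1 when m = 0 and 0 when m < 0; otherwise the usual real power. *)
Definition pow_neg (R : realType) (x m : R) : \bar R :=
  if x == 0 then (if m == 0 then 1%E else if 0 < m then +oo%E else 0%E)
  else ((x `^ (- m))%:E).

(* Since p >= 0 near its zero theta0, the linear term of its Taylor expansion
   vanishes there, so p <= (D r)^2 on the cube of side r at theta0.  For
   t_k = s 2^-k, the boxes theta0 + (t_k/2, t_k] x (0, t_k]^(n-1) are pairwise
   disjoint, lie in the ball, have volume t_k^n / 2, and on the k-th box
   p^-m >= (D t_k)^-n because p <= 1 and m >= n/2.  Each box therefore
   contributes D^-n / 2 to the integral. *)

From HB Require Import structures.
From mathcomp Require Import all_boot all_order all_algebra.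
From mathcomp Require Import all_classical all_reals all_analysis.
From mathcomp Require Import ring lra.
From mathcomp Require mpoly.
Set Implicit Arguments. Unset Strict Implicit. Unset Printing Implicit Defensive.
Import Order.TTheory GRing.Theory Num.Theory.
Local Open Scope classical_set_scope.
Local Open Scope ring_scope.

Lemma ler_norm_sum_mul (R : numDomainType) n (g d : 'I_n -> R) r :
  (forall i, `|d i| <= r) -> `|\sum_i g i * d i| <= (\sum_i `|g i|) * r.
Proof.
move=> hd; apply: (le_trans (ler_norm_sum _ _ _)).
rewrite mulr_suml; apply: ler_sum => i _; rewrite normrM.
exact: ler_wpM2l.
Qed.

Section quadratic_taylor.
Variables (R : realFieldType) (n : nat) (c : n.-tuple R).

Definition in_cube (r : R) (x : n.-tuple R) :=
  forall i, `|tnth x i - tnth c i| <= r.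

Definition quadratic_taylor (F : n.-tuple R -> R) :=
  exists (g : 'I_n -> R) (C : R), 0 <= C /\
    forall r x, 0 < r -> r <= 1 -> in_cube r x ->
      `|F x - F c - \sum_i g i * (tnth x i - tnth c i)| <= C * r ^+ 2.

Lemma eq_quadratic_taylor F G : F =1 G -> quadratic_taylor F -> quadratic_taylor G.
Proof. by move=> /funext <-. Qed.

Lemma quadratic_taylor_cst a : quadratic_taylor (fun _ => a).
Proof.
exists (fun _ => 0), 0; split => // r x _ _ _.
by rewrite subrr big1 ?subr0 ?normr0 ?mul0r // => i _; rewrite mul0r.
Qed.

Lemma quadratic_taylor_coord j : quadratic_taylor (fun x => tnth x j).
Proof.
exists (fun i => (i == j)%:R), 0; split => // r x _ _ _.
rewrite (bigD1 j) //= eqxx mul1r big1 ?addr0 ?subrr ?normr0 ?mul0r //.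
by move=> i /negbTE ->; rewrite mul0r.
Qed.

Lemma quadratic_taylorD F1 F2 : quadratic_taylor F1 -> quadratic_taylor F2 ->
  quadratic_taylor (fun x => F1 x + F2 x).
Proof.
move=> [g1 [C1 [C1_ge0 H1]]] [g2 [C2 [C2_ge0 H2]]].
exists (fun i => g1 i + g2 i), (C1 + C2); split; first exact: addr_ge0.
move=> r x r_gt0 r_le1 hx; rewrite mulrDl.
under eq_bigr do rewrite mulrDl.
rewrite big_split /=.
set u1 := \sum_i _; set u2 := \sum_i _.
have -> : F1 x + F2 x - (F1 c + F2 c) - (u1 + u2) =
          (F1 x - F1 c - u1) + (F2 x - F2 c - u2) by ring.
by apply: (le_trans (ler_normD _ _)); apply: lerD; [exact: H1 | exact: H2].
Qed.

Lemma quadratic_taylorM F1 F2 : quadratic_taylor F1 -> quadratic_taylor F2 ->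
  quadratic_taylor (fun x => F1 x * F2 x).
Proof.
move=> [g1 [C1 [C1_ge0 H1]]] [g2 [C2 [C2_ge0 H2]]].
set a := F1 c; set b := F2 c.
set G1 := \sum_i `|g1 i|; set G2 := \sum_i `|g2 i|.
have G1_ge0 : 0 <= G1 by apply: sumr_ge0.
have G2_ge0 : 0 <= G2 by apply: sumr_ge0.
exists (fun i => a * g2 i + b * g1 i),
  (`|a| * C2 + `|b| * C1 + (G1 + C1) * (G2 + C2)).
split; first by rewrite !addr_ge0 ?mulr_ge0 ?addr_ge0.
move=> r x r_gt0 r_le1 hx.
set u := \sum_i g1 i * (tnth x i - tnth c i).
set v := \sum_i g2 i * (tnth x i - tnth c i).
have e1_le := H1 r x r_gt0 r_le1 hx; have e2_le := H2 r x r_gt0 r_le1 hx.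
rewrite -/a -/u in e1_le; rewrite -/b -/v in e2_le.
set e1 := F1 x - a - u in e1_le *; set e2 := F2 x - b - v in e2_le *.
have r2_le : r ^+ 2 <= r by rewrite expr2 ger_pMl.
(* [F1 x = a + (u + e1)] with [u + e1 = O(r)], and similarly for [F2]. *)
have h1 : `|u + e1| <= (G1 + C1) * r.
  apply: (le_trans (ler_normD _ _)); rewrite mulrDl; apply: lerD.
    exact: ler_norm_sum_mul.
  by apply: (le_trans e1_le); exact: ler_wpM2l.
have h2 : `|v + e2| <= (G2 + C2) * r.
  apply: (le_trans (ler_normD _ _)); rewrite mulrDl; apply: lerD.
    exact: ler_norm_sum_mul.
  by apply: (le_trans e2_le); exact: ler_wpM2l.
have -> : F1 x * F2 x - a * b - \sum_i (a * g2 i + b * g1 i) * (tnth x i - tnth c i)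
    = a * e2 + b * e1 + (u + e1) * (v + e2).
  under eq_bigr do rewrite mulrDl -!mulrA.
  by rewrite big_split /= -!mulr_sumr -/u -/v /e1 /e2; ring.
apply: (le_trans (ler_normD _ _)).
apply: (le_trans (lerD (ler_normD _ _) (lexx _))).
rewrite !normrM 2!mulrDl; apply: lerD.
  by rewrite -!mulrA; apply: lerD; apply: ler_wpM2l.
by rewrite expr2 mulrACA; apply: ler_pM.
Qed.

Lemma quadratic_taylor_sum (I : Type) (s : seq I) F :
  (forall i, quadratic_taylor (F i)) ->
  quadratic_taylor (fun x => \sum_(i <- s) F i x).
Proof.
move=> HF; elim: s => [|i s IH].
  by apply: (eq_quadratic_taylor (F := fun _ => 0)) (quadratic_taylor_cst 0) => x;
    rewrite big_nil.
apply: (eq_quadratic_taylor (F := fun x => F i x + \sum_(j <- s) F j x)).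
  by move=> x; rewrite big_cons.
exact: quadratic_taylorD.
Qed.

Lemma quadratic_taylor_prod (I : Type) (s : seq I) F :
  (forall i, quadratic_taylor (F i)) ->
  quadratic_taylor (fun x => \prod_(i <- s) F i x).
Proof.
move=> HF; elim: s => [|i s IH].
  by apply: (eq_quadratic_taylor (F := fun _ => 1)) (quadratic_taylor_cst 1) => x;
    rewrite big_nil.
apply: (eq_quadratic_taylor (F := fun x => F i x * \prod_(j <- s) F j x)).
  by move=> x; rewrite big_cons.
exact: quadratic_taylorM.
Qed.

Lemma quadratic_taylorX F k :
  quadratic_taylor F -> quadratic_taylor (fun x => F x ^+ k).
Proof.
move=> HF; elim: k => [|k IH].
  exact: (eq_quadratic_taylor (F := fun _ => 1)) (quadratic_taylor_cst 1).
apply: (eq_quadratic_taylor (F := fun x => F x * F x ^+ k)).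
  by move=> x; rewrite exprS.
exact: quadratic_taylorM.
Qed.

Lemma quadratic_taylor_meval (p : mpoly.mpoly n R) :
  quadratic_taylor (fun x => mpoly.meval (fun i => tnth x i) p).
Proof.
apply: (eq_quadratic_taylor (fun x => esym (mpoly.mevalE (fun i => tnth x i) p))).
apply: quadratic_taylor_sum => m; apply: quadratic_taylorM.
  exact: quadratic_taylor_cst.
by apply: quadratic_taylor_prod => i; apply: quadratic_taylorX;
  exact: quadratic_taylor_coord.
Qed.

End quadratic_taylor.

Lemma le0_linear_le_quadratic (R : realFieldType) (a C delta : R) : 0 < delta ->
  (forall t, 0 < t -> t <= delta -> a * t <= C * t ^+ 2) -> a <= 0.
Proof.
move=> delta_gt0 H; rewrite leNgt; apply/negP => a_gt0.
have C1_gt0 : 0 < `|C| + 1 by rewrite ltr_pwDr.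
pose t := Num.min delta (a / (2 * (`|C| + 1))).
have t_gt0 : 0 < t by rewrite lt_min delta_gt0 divr_gt0 ?mulr_gt0.
have := H t t_gt0; rewrite ge_min lexx => /(_ isT).
rewrite expr2 mulrA ler_pM2r // => a_le.
have : C * t <= a / 2.
  apply: (le_trans (ler_wpM2r (ltW t_gt0) (ler_norm C))).
  apply: (le_trans (y := (`|C| + 1) * (a / (2 * (`|C| + 1))))).
    apply: ler_pM; rewrite ?(ltW t_gt0) ?lerDl //.
    by rewrite /t ge_min lexx orbT.
  rewrite le_eqVlt; apply/orP; left; apply/eqP.
  by field; rewrite gt_eqF.
lra.
Qed.

Section coord_shift.
Variables (R : realType) (n : nat) (c : n.-tuple R).

Definition coord_shift (i : 'I_n) (t : R) : n.-tuple R :=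
  [tuple tnth c j + (if j == i then t else 0) | j < n].

Lemma coord_shiftB i t j :
  tnth (coord_shift i t) j - tnth c j = if j == i then t else 0.
Proof. by rewrite tnth_mktuple addrC addKr. Qed.

Lemma coord_shift_in_cube i t : in_cube c `|t| (coord_shift i t).
Proof. by move=> j; rewrite coord_shiftB; case: ifP; rewrite ?normr0. Qed.

Lemma coord_shift_in_ball i t eps :
  `|t| < eps -> euclid_ball c eps (coord_shift i t).
Proof.
move=> t_lt; rewrite /euclid_ball /= (bigD1 i) //= coord_shiftB eqxx.
rewrite big1 ?addr0 => [|j /negbTE ji]; last by rewrite coord_shiftB ji expr0n.
by rewrite -real_normK ?num_real // ltrXn2r.
Qed.

Lemma sum_coord_shift (g : 'I_n -> R) i t :
  \sum_j g j * (tnth (coord_shift i t) j - tnth c j) = g i * t.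
Proof.
rewrite (bigD1 i) //= coord_shiftB eqxx big1 ?addr0 // => j /negbTE ji.
by rewrite coord_shiftB ji mulr0.
Qed.

End coord_shift.

Lemma quadratic_taylor_local_min (R : realType) n (c : n.-tuple R) F eps :
  quadratic_taylor c F -> F c = 0 -> 0 < eps ->
  (forall x, euclid_ball c eps x -> 0 <= F x) ->
  exists D : R, 1 <= D /\
    forall r x, 0 < r -> r <= 1 -> in_cube c r x -> F x <= (D * r) ^+ 2.
Proof.
move=> [g [C [C_ge0 HF]]] Fc0 eps_gt0 F_ge0.
pose delta := Num.min 1 (eps / 2).
have delta_gt0 : 0 < delta by rewrite lt_min ltr01 divr_gt0.
have delta_le1 : delta <= 1 by rewrite ge_min lexx.
have axis_bound i t : 0 < `|t| -> `|t| <= delta -> - (g i * t) <= C * t ^+ 2.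
  move=> t_gt0 t_le.
  have t_lt_eps : `|t| < eps.
    apply: (le_lt_trans t_le); rewrite /delta gt_min ltr_pdivrMr // ltr_pMr ?ltr1n //.
    by rewrite orbT.
  have := HF _ _ t_gt0 (le_trans t_le delta_le1) (coord_shift_in_cube c i t).
  rewrite real_normK ?num_real // Fc0 subr0 sum_coord_shift.
  have := F_ge0 _ (coord_shift_in_ball c i t_lt_eps).
  by move=> Fx_ge0 /ler_normlP[]; lra.
have g0 i : g i = 0.
  apply/eqP; rewrite eq_le; apply/andP; split.
    apply: (le0_linear_le_quadratic delta_gt0) => t t_gt0 t_le.
    have := axis_bound i (- t); rewrite normrN gtr0_norm // sqrrN mulrN opprK.
    exact.
  rewrite -oppr_le0; apply: (le0_linear_le_quadratic delta_gt0) => t t_gt0 t_le.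
  by rewrite mulNr; apply: axis_bound; rewrite gtr0_norm.
exists (C + 1); split => [|r x r_gt0 r_le1 hx]; first by rewrite lerDr.
have := HF r x r_gt0 r_le1 hx; rewrite Fc0 subr0 big1 => [|i _]; last first.
  by rewrite g0 mul0r.
rewrite subr0 => /(le_trans (ler_norm _))/le_trans; apply.
by rewrite exprMn ler_wpM2r ?exprn_ge0 ?ltW //; nra.
Qed.

Lemma in_cube_euclid_ball (R : realType) n (c x : n.-tuple R) r eps :
  0 <= r -> r * n%:R < eps -> in_cube c r x -> euclid_ball c eps x.
Proof.
move=> r_ge0 rn_lt hx; rewrite /euclid_ball /=.
apply: (le_lt_trans (y := \sum_(i < n) r ^+ 2)).
  apply: ler_sum => i _; rewrite -real_normK ?num_real //.
  by apply: lerXn2r; rewrite ?nnegrE.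
rewrite sumr_const card_ord -mulr_natl.
apply: (le_lt_trans (y := (r * n%:R) ^+ 2)); last by rewrite ltrXn2r ?mulr_ge0.
rewrite exprMn mulrC ler_wpM2l ?exprn_ge0 //.
rewrite -natrX ler_nat; have [->|n_gt0] := posnP n; first by [].
exact: leq_pmulr.
Qed.

Section box.
Variables (R : realType) (n : nat).

Definition box (a b : 'I_n -> R) : set (n.-tuple R) :=
  [set x | forall i, a i < tnth x i <= b i].

Lemma measurable_box a b : measurable (box a b).
Proof.
have -> : box a b = \bigcap_(i in [set: 'I_n])
    ((fun x : n.-tuple R => tnth x i) @^-1` [set` `]a i, b i]%R]).
  apply/seteqP; split => x /= h; first by move=> i _ /=; rewrite in_itv /=; exact: h.
  by move=> i; have := h i I; rewrite /= in_itv.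
apply: fin_bigcap_measurable; first exact: finite_finset.
move=> i _.
by have := measurable_tnth i measurableT (measurable_itv `]a i, b i]%R); rewrite setTI.
Qed.

End box.

Lemma lebesgue_n_set0 (R : realType) n : @lebesgue_n R n set0 = 0%E.
Proof.
elim: n => [|n IH] /=; first by rewrite indicE in_set0.
rewrite (_ : (fun x : R => _) = fun _ => 0%E); first exact: integral0.
by apply: funext => x; rewrite -IH.
Qed.

Lemma lebesgue_n_box (R : realType) n (a b : 'I_n -> R) : (forall i, a i <= b i) ->
  @lebesgue_n R n (box a b) = (\prod_i (b i - a i))%:E.
Proof.
elim: n a b => [|n IH] a b ab /=.
  by rewrite big_ord0 indicE mem_set //= => -[].
set E := [set` `]a ord0, b ord0]%R].
set P := \prod_(j < n) (b (lift ord0 j) - a (lift ord0 j)).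
have P_ge0 : 0 <= P by apply: prodr_ge0 => j _; rewrite subr_ge0.
have mE : measurable E by exact: measurable_itv.
(* Sections of a box are the box of the remaining coordinates, or empty. *)
transitivity (\int[@lebesgue_measure R]_(x in setT) (P * \1_E x)%:E)%E.
  apply: eq_integral => x _; rewrite indicE.
  have [xE|xNE] := boolP (x \in E).
    rewrite mulr1 -IH => [|j]; last exact: ab.
    congr (lebesgue_n _); apply/seteqP; split => t /= h.
      by move=> j; rewrite -(tnthS x t) h.
    move=> i; case: (unliftP ord0 i) => [j ->|->]; first by rewrite tnthS.
    by rewrite tnth0; move: xE; rewrite /E inE /= in_itv.
  rewrite mulr0n mulr0 (_ : [set t | _] = set0) ?lebesgue_n_set0 //.
  apply/seteqP; split => t //= h; apply/negP: xNE; rewrite negbK /E inE /= in_itv.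
  by have := h ord0; rewrite tnth0.
rewrite (integralZl_indic (m := @lebesgue_measure R) measurableT (fun _ => E)) //=;
  last by move=> /lt_le_trans/(_ P_ge0); rewrite ltxx.
rewrite integral_indic // setIT.
transitivity (P%:E * if (a ord0 < b ord0)%R then (b ord0 - a ord0)%:E else 0)%E.
  congr (_ * _)%E.
  exact: (lebesgue_measure_itv `]a ord0, b ord0]%R).
rewrite big_ord_recl.
case: ltgtP (ab ord0) => // [ab0 _|->]; last by rewrite subrr mul0r mule0.
by rewrite -EFinM mulrC.
Qed.

Section shell.
Variables (R : realType) (n : nat) (c : n.-tuple R) (i0 : 'I_n).

Definition shell (t : R) : set (n.-tuple R) :=
  box (fun i => tnth c i + (if i == i0 then t / 2 else 0)) (fun i => tnth c i + t).

Lemma measurable_shell t : measurable (shell t).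
Proof. exact: measurable_box. Qed.

Lemma lebesgue_n_shell t : 0 < t -> lebesgue_n (shell t) = (t ^+ n / 2)%:E.
Proof.
move=> t_gt0; have n_gt0 : (0 < n)%N by case: n i0 => [[]|].
rewrite lebesgue_n_box => [|i]; last first.
  rewrite lerD2l; case: ifP => _; last exact: ltW.
  by rewrite ler_pdivrMr // ler_pMr // ler1n.
congr EFin; rewrite (bigD1 i0) //= eqxx.
rewrite (eq_bigr (fun _ => t)) => [|i /negbTE ->]; last by rewrite addr0 addrC addKr.
rewrite prodr_const cardC1 card_ord -[in RHS](prednK n_gt0) exprS.
by field.
Qed.

Lemma shell_in_cube t x : 0 <= t -> shell t x -> in_cube c t x.
Proof.
move=> t_ge0 hx i; rewrite ler_norml.
by have := hx i; case: (i == i0) => /andP[lo hi]; apply/andP; split; lra.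
Qed.

Lemma shell_disjoint t t' x : t' <= t / 2 -> shell t x -> shell t' x -> False.
Proof. by move=> tt' /(_ i0) + /(_ i0); rewrite eqxx => /andP[lo _] /andP[_ hi]; lra. Qed.

End shell.

Lemma exists_small_scale (R : realFieldType) (D eps : R) (n : nat) :
  0 < D -> 0 < eps -> exists2 s, 0 < s & D * s <= 1 /\ s * n%:R < eps.
Proof.
move=> D_gt0 eps_gt0; pose s := Num.min D^-1 (eps / n.+1%:R).
exists s; first by rewrite lt_min invr_gt0 D_gt0 divr_gt0.
split; first by rewrite -(mulfV (lt0r_neq0 D_gt0)) ler_pM2l // /s ge_min lexx.
apply: (le_lt_trans (y := eps / n.+1%:R * n%:R)).
  by rewrite ler_wpM2r // /s ge_min lexx orbT.
by rewrite mulrAC ltr_pdivrMr // ltr_pM2l // ltr_nat.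
Qed.

Definition dyadic (R : realFieldType) (s : R) (k : nat) := s / 2 ^+ k.

Lemma dyadic_gt0 (R : realFieldType) (s : R) k : 0 < s -> 0 < dyadic s k.
Proof. by move=> s_gt0; rewrite divr_gt0 // exprn_gt0. Qed.

Lemma dyadic_le (R : realFieldType) (s : R) k : 0 <= s -> dyadic s k <= s.
Proof.
move=> s_ge0; rewrite /dyadic ler_pdivrMr ?exprn_gt0 // ler_peMr //.
by rewrite exprn_ege1 // ler1n.
Qed.

Lemma dyadicS (R : realFieldType) (s : R) k : dyadic s k.+1 = dyadic s k / 2.
Proof. by rewrite /dyadic exprSr invfM mulrA. Qed.

Lemma dyadic_le_half (R : realFieldType) (s : R) j k : 0 <= s -> (j < k)%N ->
  dyadic s k <= dyadic s j / 2.
Proof.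
move=> s_ge0; elim: k => // k IH; rewrite ltnS leq_eqVlt => /orP[/eqP ->|jk].
  by rewrite dyadicS.
rewrite dyadicS; apply: (le_trans _ (IH jk)); rewrite ler_pdivrMr //.
by rewrite ler_peMr ?ler1n // /dyadic divr_ge0 ?exprn_ge0.
Qed.

Section dyadic_shells.
Variables (R : realType) (n : nat) (c : n.-tuple R) (i0 : 'I_n) (D s : R).
Hypotheses (D_gt0 : 0 < D) (s_gt0 : 0 < s).

Lemma dyadic_shell_disjoint j k x :
  shell c i0 (dyadic s j) x -> shell c i0 (dyadic s k) x -> j = k.
Proof.
case: (ltngtP j k) => // jk Bj Bk; exfalso.
  exact: shell_disjoint (dyadic_le_half (ltW s_gt0) jk) Bj Bk.
exact: shell_disjoint (dyadic_le_half (ltW s_gt0) jk) Bk Bj.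
Qed.

Lemma dyadic_shell_in_cube k x :
  shell c i0 (dyadic s k) x -> in_cube c (dyadic s k) x.
Proof. exact/shell_in_cube/ltW/dyadic_gt0. Qed.

Lemma dyadic_shell_in_ball eps k :
  s * n%:R < eps -> shell c i0 (dyadic s k) `<=` euclid_ball c eps.
Proof.
move=> sn_lt x /dyadic_shell_in_cube; apply: in_cube_euclid_ball.
  exact/ltW/dyadic_gt0.
by apply: le_lt_trans sn_lt; rewrite ler_wpM2r // dyadic_le // ltW.
Qed.

Lemma shell_weight_gt0 k : 0 < ((D * dyadic s k)^-1) ^+ n.
Proof. by rewrite exprn_gt0 // invr_gt0 mulr_gt0 // dyadic_gt0. Qed.

Lemma shell_weight_lt k :
  ((D * dyadic s k)^-1) ^+ n < ((D * dyadic s k.+1)^-1) ^+ n.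
Proof.
have n_gt0 : n != 0%N by case: n i0 => [[]|].
have Dt_gt0 : 0 < D * dyadic s k by rewrite mulr_gt0 // dyadic_gt0.
have t_gt0 := dyadic_gt0 k s_gt0.
rewrite ltrXn2r ?invr_ge0 ?ltW // dyadicS ltf_pV2 ?posrE ?mulr_gt0 ?divr_gt0 //.
by rewrite ltr_pM2l // gtr_pMr // invf_lt1 ?ltr1n.
Qed.

Lemma shell_weight_volume k :
  ((((D * dyadic s k)^-1) ^+ n)%:E * lebesgue_n (shell c i0 (dyadic s k)) =
   ((D^-1) ^+ n / 2)%:E)%E.
Proof.
have t_gt0 := dyadic_gt0 k s_gt0.
rewrite lebesgue_n_shell // -EFinM; congr EFin.
rewrite invfM exprMn -mulrA; congr (_ * _).
by rewrite mulrA -exprMn mulVf ?gt_eqF // expr1n mul1r.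
Qed.

End dyadic_shells.

Lemma pow_neg_ge0 (R : realType) (x m : R) : (0 <= pow_neg x m)%E.
Proof.
rewrite /pow_neg; case: ifP => _; last by rewrite lee_fin powR_ge0.
by case: ifP => _; [rewrite lee_fin ler01 | case: ifP].
Qed.

Lemma expr_inv_le_powRN (R : realType) (q u m : R) (n : nat) :
  0 < q -> q <= u ^+ 2 -> 0 < u -> u <= 1 -> n%:R / 2 <= m ->
  (u^-1) ^+ n <= q `^ (- m).
Proof.
move=> q_gt0 qu u_gt0 u_le1 nm.
have q_le1 : q <= 1 by apply: (le_trans qu); rewrite expr_le1 // ltW.
apply: (le_trans (y := q `^ (- (n%:R / 2)))); last first.
  by apply: ger_powR; [rewrite q_gt0 q_le1 | rewrite lerN2].
have u_ge0 : 0 <= u := ltW u_gt0.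
have un : u ^+ n = (u ^+ 2) `^ (n%:R / 2).
  rewrite -[u ^+ 2](powR_mulrn _ u_ge0) -powRrM -(powR_mulrn _ u_ge0).
  by congr (_ `^ _); rewrite mulrC -mulrA mulVf ?mulr1 // pnatr_eq0.
rewrite powRN exprVn un lef_pV2 ?posrE ?powR_gt0 ?exprn_gt0 //.
by apply: ge0_ler_powR => //; rewrite nnegrE ?exprn_ge0 // ltW.
Qed.

Lemma pow_neg_ge (R : realType) (q u m : R) (n : nat) :
  0 <= q -> q <= u ^+ 2 -> 0 < u -> u <= 1 -> n%:R / 2 <= m ->
  (((u^-1) ^+ n)%:E <= pow_neg q m)%E.
Proof.
move=> q_ge0 qu u_gt0 u_le1 nm; rewrite /pow_neg.
have [q0|q_neq0] := eqVneq q 0; last first.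
  by rewrite lee_fin expr_inv_le_powRN // lt_neqAle eq_sym q_neq0.
have m_ge0 : 0 <= m by apply: le_trans nm; rewrite divr_ge0.
have [m0|m_neq0] := eqVneq m 0; last by rewrite lt_neqAle eq_sym m_neq0 m_ge0 leey.
suff -> : n = 0%N by [].
by move: nm; rewrite m0 => nm0; apply/eqP; rewrite -leqn0 -(ler_nat R); lra.
Qed.

Lemma natmul_le_eq_pinfty (R : realType) (x : \bar R) (kap : R) : 0 < kap ->
  (forall K : nat, ((K%:R * kap)%:E <= x)%E) -> x = +oo%E.
Proof.
case: x => [r| |] // kap_gt0 x_ge; last by have := x_ge 0%N; rewrite mul0r.
have := x_ge (Num.truncn (r / kap)).+1; rewrite lee_fin.
have := truncnS_gt (r / kap); rewrite ltr_pdivrMr // => /lt_le_trans/[apply].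
by rewrite ltxx.
Qed.

Section raw_integral.
Local Open Scope ereal_scope.
Import HBNNSimple.
Context d (T : measurableType d) (R : realType) (mu : set T -> \bar R).
Hypothesis mu0 : mu set0 = 0.

Lemma sintegral_eq0 (h : {nnsfun T >-> R}) : (forall x, h x = 0%R) ->
  sintegral mu h = 0.
Proof.
move=> h0; rewrite /sintegral fsbig1 // => r _.
have [->|r_neq0] := eqVneq r 0%R; first by rewrite mul0e.
rewrite (_ : _ @^-1` _ = set0) ?mu0 ?mule0 //.
by apply/seteqP; split => x //=; rewrite h0 => /esym/eqP; rewrite (negbTE r_neq0).
Qed.

(* No measure structure on [mu] is needed: the integral is a difference of
   suprema of integrals of simple functions. *)
Lemma sintegral_le_integral (D : set T) (f : T -> \bar R) (h : {nnsfun T >-> R}) :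
  (forall x, D x -> 0 <= f x) -> (forall x, (h x)%:E <= (f \_ D) x) ->
  sintegral mu h <= \int[mu]_(x in D) f x.
Proof.
move=> f_ge0 hf; rewrite /integral; set g := f \_ D.
have g_ge0 x : 0 <= g x by rewrite /g /patch; case: ifP => // /set_mem/f_ge0.
apply: lee_paddr.
  rewrite oppe_ge0; apply: ge_ereal_sup => _ [h' /= h'_le <-].
  rewrite sintegral_eq0 // => x; apply/eqP; rewrite eq_le fun_ge0 andbT -lee_fin.
  by rewrite (le_trans (h'_le x)) // (ge0_funenegE (D := setT)) ?in_setT.
apply: ereal_sup_ubound; exists h => //= x.
by rewrite (ge0_funeposE (D := setT)) ?in_setT.
Qed.

End raw_integral.

Section layers.
Import HBNNSimple Order.NatMonotonyTheory.
Context d (T : measurableType d) (R : realType).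
Variables (B : nat -> set T) (c : nat -> R).
Hypotheses (mB : forall k, measurable (B k)) (c_gt0 : forall k, 0 < c k)
  (B_disj : forall j k x, B j x -> B k x -> j = k).

Definition layers (K : nat) : {nnsfun T >-> R} :=
  sum_nnsfun (fun k => scale_nnsfun (indic_nnsfun R (mB k)) (ltW (c_gt0 k))) K.

Lemma layersE K x : layers K x = \sum_(k < K) c k * \1_(B k) x.
Proof. by rewrite sum_nnsfunE. Qed.

Lemma layers_in K k x : (k < K)%N -> B k x -> layers K x = c k.
Proof.
move=> kK Bkx; rewrite layersE (bigD1 (Ordinal kK)) //= indicE mem_set // mulr1.
rewrite big1 ?addr0 // => j /eqP jk; rewrite indicE memNset ?mulr0 // => Bjx.
by apply: jk; apply: val_inj; exact: B_disj Bjx Bkx.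
Qed.

Lemma layers_out K x : (forall k, (k < K)%N -> ~ B k x) -> layers K x = 0.
Proof.
move=> xNB; rewrite layersE big1 // => k _.
by rewrite indicE memNset ?mulr0 //; exact: xNB.
Qed.

Lemma layersP K x :
  (exists2 k, (k < K)%N & B k x /\ layers K x = c k) \/ layers K x = 0.
Proof.
have [[k kK Bkx]|xNB] := pselect (exists2 k, (k < K)%N & B k x).
  by left; exists k => //; split => //; exact: layers_in.
by right; apply: layers_out => k kK Bkx; apply: xNB; exists k.
Qed.

Hypothesis c_lt : forall k, c k < c k.+1.

Lemma preimage_layers K k : (k < K)%N -> layers K @^-1` [set c k] = B k.
Proof.
have c_inj : injective c := inc_inj (le_mono (homo_ltn_lt c_lt)).
move=> kK; apply/seteqP; split => [x /=|x Bkx]; last exact: layers_in.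
by case: (layersP K x) => [[j _ [Bjx ->]] /c_inj <-|-> /esym/eqP]; rewrite ?gt_eqF.
Qed.

Lemma sintegral_layers (mu : set T -> \bar R) K : mu set0 = 0%E ->
  sintegral mu (layers K) = (\sum_(k < K) (c k)%:E * mu (B k))%E.
Proof.
have c_inj : injective c := inc_inj (le_mono (homo_ltn_lt c_lt)).
move=> mu0; rewrite /sintegral -(fsbig_widen (c @` `I_K)) //; last first.
  move=> r [_ /= rNc]; have [->|r_neq0] := eqVneq r 0; first by rewrite mul0e.
  rewrite (_ : _ @^-1` _ = set0) ?mu0 ?mule0 //; apply/seteqP; split => x //=.
  case: (layersP K x) => [[k kK [_ ->]] rk|-> r0]; first by apply: rNc; exists k.
  by rewrite -r0 eqxx in r_neq0.
rewrite fsbig_image; last by move=> i j _ _ /c_inj.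
by rewrite -fsbig_ord; apply: eq_bigr => k _; rewrite preimage_layers.
Qed.

Lemma integral_layers_pinfty (mu : set T -> \bar R) (D : set T) (f : T -> \bar R)
    (kap : R) : mu set0 = 0%E -> 0 < kap ->
  (forall x, D x -> (0 <= f x)%E) -> (forall k, B k `<=` D) ->
  (forall k x, B k x -> ((c k)%:E <= f x)%E) ->
  (forall k, (kap%:E <= (c k)%:E * mu (B k))%E) ->
  (\int[mu]_(x in D) f x)%E = +oo%E.
Proof.
move=> mu0 kap_gt0 f_ge0 BD cf kap_le; apply: (natmul_le_eq_pinfty kap_gt0) => K.
apply: (le_trans _ (sintegral_le_integral (h := layers K) mu0 f_ge0 _)).
  rewrite sintegral_layers // (_ : (K%:R * kap)%:E = \sum_(k < K) kap%:E)%E.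
    by apply: lee_sum => k _; exact: kap_le.
  by rewrite sumEFin sumr_const card_ord mulr_natl.
move=> x; rewrite /patch; case: ifPn => [/set_mem Dx|/negP xND].
  by case: (layersP K x) => [[k _ [Bkx ->]]|->]; [exact: cf | exact: f_ge0].
case: (layersP K x) => [[k _ [Bkx _]]|-> //].
by case: xND; apply/mem_set; exact: BD Bkx.
Qed.

End layers.

Theorem propositionA4 (R : realType) (n : nat) (hn : (0 < n)%N)
  (p : mpoly.mpoly n R) (theta0 : n.-tuple R) (eps : R) (m : R) :
  poly_eval p theta0 = 0 ->
  0 < eps ->
  (forall theta, euclid_ball theta0 eps theta -> 0 <= poly_eval p theta) ->
  n%:R / 2 <= m ->
  (\int[@lebesgue_n R n]_(theta in euclid_ball theta0 eps)
      pow_neg (poly_eval p theta) m)%E = +oo%E.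
Proof.
move=> p0 eps_gt0 p_ge0 nm.
have [D [D_ge1 p_le]] :=
  quadratic_taylor_local_min (quadratic_taylor_meval theta0 p) p0 eps_gt0 p_ge0.
have D_gt0 : 0 < D := lt_le_trans ltr01 D_ge1.
have [s s_gt0 [Ds_le1 sn_lt]] := exists_small_scale n D_gt0 eps_gt0.
have Dt_le1 k : D * dyadic s k <= 1.
  by apply: le_trans Ds_le1; rewrite ler_pM2l // dyadic_le ?ltW.
pose i0 := Ordinal hn; pose B k := shell theta0 i0 (dyadic s k).
apply: (integral_layers_pinfty (B := B) (c := fun k => ((D * dyadic s k)^-1) ^+ n)
  _ _ _ _ (kap := (D^-1) ^+ n / 2)).
- by move=> k; exact: measurable_shell.
- by move=> k; exact: shell_weight_gt0.
- exact: dyadic_shell_disjoint.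
- by move=> k; exact: shell_weight_lt.
- exact: lebesgue_n_set0.
- by rewrite divr_gt0 // exprn_gt0 // invr_gt0.
- by move=> x _; exact: pow_neg_ge0.
- by move=> k; exact: dyadic_shell_in_ball.
- move=> k x Bkx; apply: pow_neg_ge nm; rewrite ?mulr_gt0 ?dyadic_gt0 //.
    exact/p_ge0/(dyadic_shell_in_ball s_gt0 sn_lt Bkx).
  apply: p_le (dyadic_shell_in_cube s_gt0 Bkx) => //; first exact: dyadic_gt0.
  exact: le_trans (ler_peMl (ltW (dyadic_gt0 k s_gt0)) D_ge1) (Dt_le1 k).
- by move=> k; rewrite shell_weight_volume.
Qed.
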